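(* Let $A\in\mathbb{Z}^{d\times n}$ be totally unimodular, $\mathbf{b}\in\mathbb{Z}^d$, $\mathbf{c}\in\mathbb{Z}^n$, $\mathbf{u}\in\mathbb{Z}_{\ge0}^n$. Then from any feasible solution of $\min\{\mathbf{c}^\top\mathbf{x} : A\mathbf{x}=\mathbf{b},\ \mathbf{0}\le\mathbf{x}\le\mathbf{u},\ \mathbf{x}\in\mathbb{Z}^n\}$, every sequence of discrete steepest-descent augmentations reaches an optimal solution after at most $n(d+1)\|\mathbf{c}\|_1$ augmentations.
   Context: For $\mathbf{v},\mathbf{w}\in\mathbb{R}^n$ write $\mathbf{v}\sqsubseteq\mathbf{w}$ if $v_iw_i\ge0$ and $|v_i|\le|w_i|$ for all $i$; the Graver basis $\mathcal{G}(A)$ is the set of $\sqsubseteq$-minimal elements of $(\ker(A)\cap\mathbb{Z}^n)\setminus\{\mathbf{0}\}$. Discrete steepest-descent augmentation (ILP): given a feasible $\mathbf{x}_k$, choose $\mathbf{z}\in\mathcal{G}(A)$ maximizing $-\mathbf{c}^\top\mathbf{z}/\|\mathbf{z}\|_1$ among all $\mathbf{z}\in\mathcal{G}(A)$ with $\mathbf{x}_k+\mathbf{z}$ feasible; if this maximum is positive, let $\alpha$ be the largest integer with $\mathbf{x}_k+\alpha\mathbf{z}$ feasible and set $\mathbf{x}_{k+1}:=\mathbf{x}_k+\alpha\mathbf{z}$, otherwise stop. *)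

From HB Require Import structures.
From mathcomp Require Import all_boot all_order all_algebra.
Set Implicit Arguments. Unset Strict Implicit. Unset Printing Implicit Defensive.
Import Order.TTheory GRing.Theory Num.Theory.
Local Open Scope ring_scope.

Definition totally_unimodular (d n : nat) (A : 'M[int]_(d, n)) : Prop :=
  forall (k : nat) (f : 'I_k -> 'I_d) (g : 'I_k -> 'I_n),
    injective f -> injective g ->
    \det (mxsub f g A) \in [:: -1; 0; 1].

Definition norm1 (n : nat) (v : 'cV[int]_n) : int := \sum_i `|v i 0|.
Definition dotv (n : nat) (c x : 'cV[int]_n) : int := \sum_i c i 0 * x i 0.

Definition conformal (n : nat) (v w : 'cV[int]_n) : Prop :=
  forall i, 0 <= v i 0 * w i 0 /\ `|v i 0| <= `|w i 0|.

Definition in_graver (d n : nat) (A : 'M[int]_(d, n)) (z : 'cV[int]_n) : Prop :=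
  [/\ A *m z = 0, z != 0 &
      forall w : 'cV[int]_n, A *m w = 0 -> w != 0 -> conformal w z -> w = z].

Definition feasible (d n : nat) (A : 'M[int]_(d, n)) (b : 'cV[int]_d)
  (u x : 'cV[int]_n) : Prop :=
  A *m x = b /\ forall i, 0 <= x i 0 <= u i 0.

Definition optimal (d n : nat) (A : 'M[int]_(d, n)) (b : 'cV[int]_d)
  (c u x : 'cV[int]_n) : Prop :=
  feasible A b u x /\
  forall y, feasible A b u y -> dotv c x <= dotv c y.

Definition sd_ratio (n : nat) (c z : 'cV[int]_n) : rat :=
  (- dotv c z)%:~R / (norm1 z)%:~R.

Definition sd_step (d n : nat) (A : 'M[int]_(d, n)) (b : 'cV[int]_d)
  (c u x y : 'cV[int]_n) : Prop :=
  exists (z : 'cV[int]_n) (alpha : int),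
    [/\ in_graver A z, feasible A b u (x + z),
        (forall z', in_graver A z' -> feasible A b u (x + z') ->
                    sd_ratio c z' <= sd_ratio c z)
      & 0 < sd_ratio c z] /\
    [/\ feasible A b u (x + alpha *: z),
        (forall beta : int, feasible A b u (x + beta *: z) -> beta <= alpha)
      & y = x + alpha *: z].

(* the stopping condition: the maximum ratio over admissible Graver
   elements is not positive (vacuous maximum included) *)
Definition sd_stops (d n : nat) (A : 'M[int]_(d, n)) (b : 'cV[int]_d)
  (c u x : 'cV[int]_n) : Prop :=
  forall z, in_graver A z -> feasible A b u (x + z) -> sd_ratio c z <= 0.

(* A Graver element of a totally unimodular matrix is a circuit, and Cramer's
   rule writes circuits with maximal minors; so it has entries in {-1, 0, 1}
   and at most d + 1 nonzero entries. The ratio -c'g / |g|_1 of each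
   augmenting direction g is therefore a fraction P / N with 1 <= P <= |c|_1
   and 1 <= N <= d + 1. Decomposing feasible directions conformally into
   Graver elements shows that the steepest ratio never increases along a run,
   and that while it stays constant every later direction was available, and
   sign compatible, right after each earlier step. A maximal step leaves a
   coordinate of its direction at a bound, which blocks all later directions
   of the same ratio; hence at most n steps share a ratio. The same
   decomposition proves optimality when no improving Graver direction is left. *)

From HB Require Import structures.
From mathcomp Require Import all_boot all_order all_algebra.
From mathcomp Require Import zify lra.
From Stdlib Require Classical_Prop IndefiniteDescription.
Import Order.TTheory GRing.Theory Num.Theory.
Set Implicit Arguments. Unset Strict Implicit. Unset Printing Implicit Defensive.
Local Open Scope ring_scope.

Lemma exists_minimizer (T : Type) (mu : T -> nat) (P : T -> Prop) :
  (exists x, P x) -> exists2 x, P x & forall y, P y -> (mu x <= mu y)%N.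
Proof.
case=> x0 Px0; elim: {x0}(mu x0) {-2}x0 (leqnn (mu x0)) Px0 => [|N IH] x0 hx0 Px0.
  by exists x0 => // y _; move: hx0; rewrite leqn0 => /eqP ->.
case: (Classical_Prop.classic (exists2 y, P y & (mu y < mu x0)%N)) => [[y Py lt_y]|].
  by apply: (IH y) => //; rewrite -ltnS (leq_trans lt_y hx0).
move=> nolower; exists x0 => // y Py; rewrite leqNgt; apply/negP => lt_y.
by apply: nolower; exists y.
Qed.

Section Vectors.
Variables (n : nat) (c : 'cV[int]_n).

Lemma dotvD (v w : 'cV[int]_n) : dotv c (v + w) = dotv c v + dotv c w.
Proof. by rewrite /dotv -big_split /=; apply: eq_bigr => i _; rewrite mxE mulrDr. Qed.

Lemma dotvZ (a : int) (v : 'cV[int]_n) : dotv c (a *: v) = a * dotv c v.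
Proof. by rewrite /dotv mulr_sumr; apply: eq_bigr => i _; rewrite mxE mulrCA. Qed.

Lemma dotvB (v w : 'cV[int]_n) : dotv c (v - w) = dotv c v - dotv c w.
Proof. by rewrite -scaleN1r dotvD dotvZ mulN1r. Qed.

Lemma dotv0 : dotv c 0 = 0.
Proof. by rewrite -(scale0r 0) dotvZ mul0r. Qed.

Lemma norm1_ge0 (v : 'cV[int]_n) : 0 <= norm1 v.
Proof. exact: sumr_ge0. Qed.

Lemma norm1_eq0 (v : 'cV[int]_n) : (norm1 v == 0) = (v == 0).
Proof.
apply/eqP/eqP => [v0|->]; last by rewrite /norm1 big1 // => i _; rewrite mxE.
apply/matrixP => i j; rewrite (ord1 j) mxE; apply/normr0_eq0.
by move/psumr_eq0P: v0 => -> // k _; apply: normr_ge0.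
Qed.

Lemma norm1_gt0 (v : 'cV[int]_n) : (0 < norm1 v) = (v != 0).
Proof. by rewrite lt_def norm1_ge0 norm1_eq0 andbT. Qed.

Lemma norm1_0 : norm1 (0 : 'cV[int]_n) = 0.
Proof. by apply/eqP; rewrite norm1_eq0. Qed.

Lemma oppr_dotv_le_norm1 (g : 'cV[int]_n) :
  (forall i, `|g i 0| <= 1) -> - dotv c g <= norm1 c.
Proof.
move=> g1; rewrite /dotv /norm1 -sumrN; apply: ler_sum => i _.
have := g1 i; set p := g i 0; set q := c i 0 => ?.
by case: (ltrgtP p 0); case: (ltrgtP q 0); nia.
Qed.

Lemma conformal_refl (v : 'cV[int]_n) : conformal v v.
Proof. by move=> i; rewrite -expr2 sqr_ge0. Qed.

Lemma conformal_trans (x y z : 'cV[int]_n) :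
  conformal x y -> conformal y z -> conformal x z.
Proof.
move=> cxy cyz i; have [+ +] := cxy i; have [+ +] := cyz i.
set p := x i 0; set q := y i 0; set r := z i 0 => ? ? ? ?; split; last lia.
by case: (ltrgtP p 0); case: (ltrgtP q 0); case: (ltrgtP r 0); nia.
Qed.

Lemma conformal_subr (w z : 'cV[int]_n) : conformal w z -> conformal (z - w) z.
Proof.
move=> cwz i; have [+ +] := cwz i; rewrite !mxE.
set p := w i 0; set q := z i 0 => ? ?.
by case: (ltrgtP p 0); case: (ltrgtP q 0); split; nia.
Qed.

Lemma norm1_conformal (w z : 'cV[int]_n) :
  conformal w z -> norm1 z = norm1 w + norm1 (z - w).
Proof.
move=> cwz; rewrite /norm1 -big_split /=; apply: eq_bigr => i _.
have [+ +] := cwz i; rewrite !mxE; set p := w i 0; set q := z i 0 => ? ?.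
by case: (ltrgtP p 0); case: (ltrgtP q 0); nia.
Qed.

Lemma norm1_conformal_lt (w z : 'cV[int]_n) :
  conformal w z -> w != z -> norm1 w < norm1 z.
Proof.
by move=> cwz neq; rewrite (norm1_conformal cwz) ltrDl norm1_gt0 subr_eq0 eq_sym.
Qed.

Lemma conformal_scaleDl (a : int) (g h : 'cV[int]_n) : 0 <= a ->
  (forall i, 0 <= g i 0 * h i 0) -> conformal h (a *: g + h).
Proof.
move=> a0 gh i; have := gh i; rewrite !mxE; set p := g i 0; set q := h i 0 => ?.
by case: (ltrgtP p 0); case: (ltrgtP q 0); split; nia.
Qed.

Lemma norm1_scaleD_le (a : int) (g h : 'cV[int]_n) :
  0 <= a -> norm1 (a *: g + h) <= a * norm1 g + norm1 h.
Proof.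
move=> a0; rewrite /norm1 mulr_sumr -big_split /=; apply: ler_sum => i _.
by rewrite !mxE; have := ler_normD (a * g i 0) (h i 0); rewrite normrM ger0_norm.
Qed.

Lemma norm1_scaleD_tight (a : int) (g h : 'cV[int]_n) : 0 < a ->
  a * norm1 g + norm1 h <= norm1 (a *: g + h) -> forall i, 0 <= g i 0 * h i 0.
Proof.
move=> a0 tight i.
pose F j := a * `|g j 0| + `|h j 0| - `|a * g j 0 + h j 0|.
have F_ge0 j : 0 <= F j.
  by rewrite subr_ge0; have := ler_normD (a * g j 0) (h j 0); rewrite normrM gtr0_norm.
have /psumr_eq0P F0 : \sum_j F j = 0.
  apply/eqP; rewrite eq_le sumr_ge0 ?andbT //.
  rewrite sumrB big_split /= -mulr_sumr subr_le0.
  by move: tight; rewrite /norm1; under [X in _ <= X -> _]eq_bigr do rewrite !mxE.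
move/eqP: (F0 (fun j _ => F_ge0 j) i isT); rewrite subr_eq0 => /eqP.
set p := g i 0; set q := h i 0 => ?.
by case: (ltrgtP p 0); case: (ltrgtP q 0); nia.
Qed.

End Vectors.

Lemma sd_ratio_le n (c z : 'cV[int]_n) (rho : rat) : z != 0 ->
  (sd_ratio c z <= rho) = ((- dotv c z)%:~R <= rho * (norm1 z)%:~R).
Proof. by rewrite -norm1_gt0 => nz; rewrite /sd_ratio ler_pdivrMr ?ltr0z. Qed.

Lemma sd_ratio_gt0 n (c z : 'cV[int]_n) : z != 0 -> (0 < sd_ratio c z) = (0 < - dotv c z).
Proof. by rewrite -norm1_gt0 => nz; rewrite /sd_ratio pmulr_lgt0 ?invr_gt0 ?ltr0z. Qed.

Lemma sd_ratio_mul n (c z : 'cV[int]_n) :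
  z != 0 -> (- dotv c z)%:~R = sd_ratio c z * (norm1 z)%:~R.
Proof. by move=> z0; rewrite /sd_ratio divfK // intr_eq0 norm1_eq0. Qed.

(** * Graver elements and conformal decomposition *)

Section Graver.
Variables (d n : nat) (A : 'M[int]_(d, n)).

Lemma graver_below (w : 'cV[int]_n) :
  A *m w = 0 -> w != 0 -> exists2 g, in_graver A g & conformal g w.
Proof.
move=> Aw w0.
have [|g [Ag g0 cgw] gmin] := exists_minimizer (fun g => absz (norm1 g))
    (P := fun g => [/\ A *m g = 0, g != 0 & conformal g w]).
  by exists w; split => //; apply: conformal_refl.
exists g => //; split => // g' Ag' g'0 cg'g; apply/eqP; apply: contraT => neq.
have := gmin g' (And3 Ag' g'0 (conformal_trans cg'g cgw)).
by have := norm1_conformal_lt cg'g neq; have := norm1_ge0 g'; lia.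
Qed.

Variables (b : 'cV[int]_d) (c u : 'cV[int]_n).

Lemma feasible_dir_kernel (x w : 'cV[int]_n) :
  feasible A b u x -> feasible A b u (x + w) -> A *m w = 0.
Proof. by case=> Ax _ [Axw _]; apply: (addrI (A *m x)); rewrite -mulmxDr Axw Ax addr0. Qed.

Lemma feasible_conformal (x w W : 'cV[int]_n) :
  feasible A b u x -> feasible A b u (x + W) -> conformal w W -> A *m w = 0 ->
  feasible A b u (x + w).
Proof.
move=> [Ax xb] [_ xWb] cwW Aw; split; first by rewrite mulmxDr Ax Aw addr0.
move=> i; have := xb i; have := xWb i; have [+ +] := cwW i; rewrite !mxE.
set p := w i 0; set q := W i 0; set y := x i 0; set U := u i 0.
move=> ? ? /andP [? ?] /andP [? ?]; apply/andP.
by case: (ltrgtP p 0); case: (ltrgtP q 0); split; nia.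
Qed.

(* Decompose [w] conformally into Graver elements, each feasible from [x]. *)
Lemma graver_ratio_bound (rho : rat) (x : 'cV[int]_n) : feasible A b u x ->
  (forall z, in_graver A z -> feasible A b u (x + z) -> sd_ratio c z <= rho) ->
  forall w, feasible A b u (x + w) -> (- dotv c w)%:~R <= rho * (norm1 w)%:~R.
Proof.
move=> fx cap w; move: {2}(absz (norm1 w)) (leqnn (absz (norm1 w))) => N.
elim: N w => [|N IH] w normw fw;
  have [->|w0] := eqVneq w 0; rewrite ?dotv0 ?norm1_0 ?oppr0 ?mulr0 //.
  by move: w0; rewrite -norm1_gt0; lia.
have Aw := feasible_dir_kernel fx fw.
have [g gG cgw] := graver_below Aw w0; have [Ag g0 _] := gG.
have fg : feasible A b u (x + g) := feasible_conformal fx fw cgw Ag.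
have fr : feasible A b u (x + (w - g)).
  by apply: feasible_conformal fx fw (conformal_subr cgw) _; rewrite mulmxBr Ag Aw subrr.
have := cap g gG fg; rewrite sd_ratio_le // => capg.
have capr : (- dotv c (w - g))%:~R <= rho * (norm1 (w - g))%:~R.
  apply: IH fr; have := norm1_conformal cgw; have := norm1_gt0 g; rewrite g0.
  by have := norm1_ge0 (w - g); lia.
rewrite (norm1_conformal cgw) -[w in dotv c w](subrK g) dotvD addrC.
by rewrite opprD !intrD mulrDr lerD.
Qed.

Lemma sd_stops_optimal (x : 'cV[int]_n) :
  feasible A b u x -> sd_stops A b c u x -> optimal A b c u x.
Proof.
move=> fx stops; split=> // y fy.
have := graver_ratio_bound fx stops (w := y - x); rewrite addrC subrK => /(_ fy).
by rewrite mul0r lerz0 dotvB; lia.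
Qed.

End Graver.

(** * Circuits of totally unimodular matrices *)

Section ColumnExtension.
Variables (R : pzRingType) (k n : nat) (g : 'I_k -> 'I_n).
Hypothesis ginj : injective g.

(* [colsub g 1%:M *m w] spreads [w] over the coordinates [g j], padding with zeros *)
Lemma colsub1_mulE (w : 'cV[R]_k) j : (colsub g 1%:M *m w) (g j) 0 = w j 0.
Proof.
rewrite mxE (bigD1 j) //= !mxE eqxx mul1r big1 ?addr0 // => j' neq.
by rewrite !mxE (inj_eq ginj) eq_sym (negPf neq) mul0r.
Qed.

Lemma colsub1_mul_out (w : 'cV[R]_k) i :
  i \notin codom g -> (colsub g 1%:M *m w) i 0 = 0.
Proof.
move=> out; rewrite mxE big1 // => j _; rewrite !mxE.
by case: eqP => [ij|]; [move: out; rewrite ij codom_f | rewrite mul0r].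
Qed.

Lemma rowsub_colsub1_mul (w : 'cV[R]_k) : rowsub g (colsub g 1%:M *m w) = w.
Proof. by apply/matrixP => j b; rewrite (ord1 b) mxE colsub1_mulE. Qed.

Lemma colsub1_mul_rowsub (v : 'cV[R]_n) :
  (forall i, i \notin codom g -> v i 0 = 0) -> colsub g 1%:M *m rowsub g v = v.
Proof.
move=> vout; apply/matrixP => i b; rewrite (ord1 b).
have [/codomP [j ->]|out] := boolP (i \in codom g); last by rewrite colsub1_mul_out ?vout.
by rewrite colsub1_mulE mxE.
Qed.

Lemma mul_colsub1 p (B : 'M[R]_(p, n)) (w : 'cV[R]_k) :
  B *m (colsub g 1%:M *m w) = colsub g B *m w.
Proof. by rewrite mulmxA mulmx_colsub mulmx1. Qed.

End ColumnExtension.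

Section Circuits.
Variables (R : realFieldType) (n : nat).

Definition supp (v : 'cV[R]_n) : {set 'I_n} := [set i | v i 0 != 0].

Definition sign_conformal (v s : 'cV[R]_n) : Prop :=
  forall i, 0 <= v i 0 * s i 0 /\ (s i 0 = 0 -> v i 0 = 0).

Lemma sign_conformal_trans (v w s : 'cV[R]_n) :
  sign_conformal v w -> sign_conformal w s -> sign_conformal v s.
Proof.
move=> cvw cws i; have [vw wv0] := cvw i; have [ws sw0] := cws i.
split; last by move/sw0/wv0.
have [w0|w0] := eqVneq (w i 0) 0; first by rewrite (wv0 w0) mul0r.
have : 0 < w i 0 ^+ 2 by rewrite lt_def sqrf_eq0 w0 sqr_ge0.
by nra.
Qed.

(* The ratio test of the simplex method: move from [v] along [y] until a
   coordinate of [v] vanishes. *)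
Lemma ratio_test (v y : 'cV[R]_n) : y != 0 -> supp y \subset supp v ->
  exists t, sign_conformal (v - t *: y) v /\ supp (v - t *: y) \proper supp v.
Proof.
move=> y0 syv; have /cV0Pn [i1 yi1] := y0.
have vi1 : v i1 0 != 0 by move: (subsetP syv i1); rewrite !inE; apply.
pose sg : R := if 0 < y i1 0 * v i1 0 then 1 else -1.
pose P i := 0 < sg * y i 0 * v i 0.
pose F i := v i 0 / (sg * y i 0).
have sg2 : sg * sg = 1 by rewrite /sg; case: ifP; rewrite ?mulr1 ?mulrNN ?mulr1.
have Pi1 : P i1.
  have := mulf_neq0 yi1 vi1; rewrite /P /sg -mulrA; case: ifP => [|/negbT]; rewrite ?mul1r //.
  by rewrite -leNgt mulN1r oppr_gt0 lt_neqAle => -> ->.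
have [i0 Pi0 i0min] := arg_minP F Pi1.
have yi0 : sg * y i0 0 != 0 by apply: contraTneq Pi0 => e; rewrite /P e mul0r ltxx.
have FE i : sg * y i 0 != 0 -> v i 0 = F i * (sg * y i 0) by move=> ?; rewrite divfK.
have t0 : 0 < F i0.
  have := Pi0; rewrite /P -mulrA (FE _ yi0) mulrC -mulrA.
  have : 0 < (sg * y i0 0) ^+ 2 by rewrite lt_def sqrf_eq0 yi0 sqr_ge0.
  by rewrite expr2; nra.
exists (F i0 * sg); have vE i : (v - F i0 * sg *: y) i 0 = v i 0 - F i0 * (sg * y i 0).
  by rewrite !mxE mulrA.
have yv0 i : v i 0 = 0 -> y i 0 = 0.
  by move=> vi; have := subsetP syv i; rewrite !inE vi eqxx; case: eqP => // _ /(_ isT).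
have conf : sign_conformal (v - F i0 * sg *: y) v.
  move=> i; rewrite vE; split; last by move=> vi; rewrite vi yv0 // !mulr0 subr0.
  case Pi: (P i).
    have yi : sg * y i 0 != 0 by apply: contraTneq Pi => e; rewrite /P e mul0r ltxx.
    have := i0min i Pi; rewrite (FE _ yi).
    have : 0 < (sg * y i 0) ^+ 2 by rewrite lt_def sqrf_eq0 yi sqr_ge0.
    by rewrite expr2; nra.
  by move: Pi; rewrite /P -mulrA => /negbT; rewrite -leNgt; nra.
split=> //; apply/properP; split.
  by apply/subsetP => i; rewrite !inE; apply: contra => /eqP /(proj2 (conf i)) ->.
exists i0; rewrite !inE; last by rewrite vE (FE _ yi0) subrr eqxx.
by apply: contraTneq Pi0 => e; rewrite /P e mulr0 ltxx.
Qed.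

Variables (p : nat) (B : 'M[R]_(p, n)) (s v : 'cV[R]_n).
Hypotheses (Bv : B *m v = 0) (v0 : v != 0) (vs : sign_conformal v s).
Hypothesis vmin : forall w, B *m w = 0 -> w != 0 -> sign_conformal w s ->
  (#|supp v| <= #|supp w|)%N.

Lemma circuit_multiple (w : 'cV[R]_n) :
  B *m w = 0 -> supp w \subset supp v -> exists a, w = a *: v.
Proof.
move=> Bw swv; have /cV0Pn [j0 vj0] := v0.
pose a := w j0 0 / v j0 0; exists a; apply/eqP; rewrite -subr_eq0.
apply/negP => /negP y0; set y := w - a *: v in y0.
have syv : supp y \subset supp v.
  apply/subsetP => i; rewrite !inE !mxE; apply: contra => /eqP vi.
  rewrite vi mulr0 subr0; have := subsetP swv i; rewrite !inE vi eqxx.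
  by case: eqP => // _ /(_ isT).
have [t [conf sprop]] := ratio_test y0 syv.
have Bv' : B *m (v - t *: y) = 0.
  by rewrite /y !(mulmxBr, =^~ scalemxAr, Bv, Bw, scaler0, subr0).
have v'0 : v - t *: y != 0.
  apply/eqP => /matrixP /(_ j0 0); rewrite !mxE /a divfK // subrr mulr0 subr0.
  by move/eqP: vj0.
have := vmin Bv' v'0 (sign_conformal_trans conf vs).
by rewrite leqNgt (proper_card sprop).
Qed.

Lemma circuit_rank k (g : 'I_k.+1 -> 'I_n) :
  injective g -> supp v =i codom g -> \rank (colsub g B) = k.
Proof.
move=> ginj suppv; set vS := rowsub g v.
have vout i : i \notin codom g -> v i 0 = 0.
  by rewrite -suppv inE negbK => /eqP.
have vE : colsub g 1%:M *m vS = v := colsub1_mul_rowsub ginj vout.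
have kerE : (kermx (colsub g B)^T == vS^T)%MS.
  apply/andP; split; last by apply/sub_kermxP; rewrite -trmx_mul -mul_colsub1 vE Bv trmx0.
  apply/row_subP => i; set r := row i _.
  have /sub_kermxP : (r <= kermx (colsub g B)^T)%MS by apply: row_sub.
  move/(congr1 trmx); rewrite trmx_mul trmxK trmx0 -mul_colsub1 // => Bext.
  have [|a ext] := circuit_multiple Bext.
    apply/subsetP => i'; rewrite inE suppv; apply: contraR => out.
    by rewrite colsub1_mul_out.
  have -> : r = a *: vS^T by rewrite -linearZ /= -[r]trmxK -(rowsub_colsub1_mul ginj r^T) ext
    /vS; congr trmx; apply/matrixP => j b; rewrite !mxE.
  by rewrite scalemx_sub.
have vS0 : vS^T != 0 by rewrite trmx_eq0; apply: contra_neq v0 => vS0; rewrite -vE vS0 mulmx0.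
have := eqmx_rank kerE; rewrite mxrank_ker mxrank_tr rank_rV vS0.
by have := rank_leq_col (colsub g B); lia.
Qed.

End Circuits.

Section SignedMinors.
Variable R : comNzRingType.

(* the generalised cross product of the rows of [M] *)
Definition signed_minors k (M : 'M[R]_(k, k.+1)) : 'cV[R]_k.+1 :=
  \col_j ((-1) ^+ j * \det (colsub (lift j) M)).

Definition adjoin_row k (x : 'rV[R]_k.+1) (M : 'M[R]_(k, k.+1)) : 'M[R]_k.+1 :=
  \matrix_(i, j) (if unlift 0 i is Some i' then M i' j else x 0 j).

Lemma det_adjoin_row k (x : 'rV[R]_k.+1) (M : 'M[R]_(k, k.+1)) :
  \det (adjoin_row x M) = (x *m signed_minors M) 0 0.
Proof.
rewrite (expand_det_row _ 0) mxE; apply: eq_bigr => j _.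
rewrite /cofactor !mxE unlift_none add0n; congr (_ * (_ * \det _)).
by apply/matrixP => i' j'; rewrite !mxE liftK.
Qed.

(* Each row of [M] adjoined to [M] gives a matrix with a repeated row. *)
Lemma mul_signed_minors k (M : 'M[R]_(k, k.+1)) : M *m signed_minors M = 0.
Proof.
apply/matrixP => a b; rewrite (ord1 b) [RHS]mxE.
have := det_adjoin_row (row a M) M; rewrite -row_mul mxE => <-.
apply: (@determinant_alternate _ _ _ 0 (lift 0 a)); first exact: neq_lift.
by move=> j; rewrite !mxE liftK unlift_none.
Qed.

End SignedMinors.

Lemma map_signed_minors (R S : comNzRingType) (f : {rmorphism R -> S}) k
    (M : 'M[R]_(k, k.+1)) :
  signed_minors (map_mx f M) = map_mx f (signed_minors M).
Proof.
apply/matrixP => j b; rewrite !mxE rmorphM rmorphXn rmorphN1 -det_map_mx.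
by congr (_ * \det _); apply/matrixP => a b'; rewrite !mxE.
Qed.

Lemma signed_minors_neq0 (F : fieldType) k (M : 'M[F]_(k, k.+1)) :
  row_free M -> signed_minors M != 0.
Proof.
move=> freeM; apply/eqP => sm0.
have rkM : \rank M = k by apply/eqP; rewrite eqn_leq rank_leq_row row_leq_rank.
have /row_subPn [i notsub] : ~~ (1%:M <= M)%MS.
  by apply/negP => /mxrankS; rewrite mxrank1 rkM ltnn.
set x := row i 1%:M in notsub.
have : \det (adjoin_row x M) != 0.
  rewrite -unitfE -unitmxE -row_full_unit -col_leq_rank.
  have sub : (x + M <= adjoin_row x M)%MS.
    rewrite addsmx_sub; apply/andP; split.
      have e : x = row 0 (adjoin_row x M) by apply/rowP => j; rewrite !mxE unlift_none.
      by rewrite {1}e row_sub.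
    apply/row_subP => i'.
    have -> : row i' M = row (lift 0 i') (adjoin_row x M) by apply/rowP => j; rewrite !mxE liftK.
    exact: row_sub.
  have lt : (M < x + M)%MS.
    rewrite ltmxE addsmxSr /=; apply: contra notsub; apply: submx_trans; exact: addsmxSl.
  by have := rank_ltmx lt; rewrite rkM => /leq_trans; apply; apply: mxrankS.
by rewrite det_adjoin_row sm0 mulmx0 mxE eqxx.
Qed.

Lemma maxrank_rowsub (F : fieldType) (m p q : nat) (X : 'M[F]_(m, q)) :
  \rank X = p -> exists f : 'I_p -> 'I_m,
    [/\ injective f, row_free (rowsub f X) & (X <= rowsub f X)%MS].
Proof.
move=> rkX; case: p / rkX; exists (maxrankfun X).
by split; [exact: maxrankfun_inj | exact: maxrowsub_free | rewrite eq_maxrowsub].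
Qed.

Lemma set_enum (T : finType) (S : {set T}) : (0 < #|S|)%N ->
  exists k (g : 'I_k.+1 -> T), [/\ #|S| = k.+1, injective g & S =i codom g].
Proof.
move=> S0; exists #|S|.-1; have cardS : #|S| = #|S|.-1.+1 by rewrite prednK.
exists (fun j => enum_val (cast_ord (esym cardS) j)); split=> //.
  by move=> j1 j2 /enum_val_inj /cast_ord_inj.
move=> x; apply/idP/codomP => [xS|[j ->]]; last exact: enum_valP.
by exists (cast_ord cardS (enum_rank_in xS x)); rewrite cast_ordK enum_rankK_in.
Qed.

Section TotallyUnimodular.
Variables (d n : nat) (A : 'M[int]_(d, n)).
Hypothesis TU : totally_unimodular A.
Local Notation Aq := (map_mx (intr : int -> rat) A).

Lemma map_intr_eq0 p q (X : 'M[int]_(p, q)) : (map_mx (intr : int -> rat) X == 0) = (X == 0).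
Proof.
apply/eqP/eqP => [/matrixP X0|->]; last by rewrite map_mx0.
by apply/matrixP => i j; have /eqP := X0 i j; rewrite !mxE intr_eq0 => /eqP.
Qed.

(* Cramer's rule: the signed maximal minors of a full-rank k x (k+1)
   submatrix span the kernel, and they lie in {-1, 0, 1} by total unimodularity. *)
Lemma TU_kernel_vector k (g : 'I_k.+1 -> 'I_n) :
  injective g -> \rank (colsub g Aq) = k ->
  exists2 w : 'cV[int]_k.+1, w != 0 & colsub g A *m w = 0 /\ forall j, `|w j 0| <= 1.
Proof.
move=> ginj rk; have [f [finj free sub]] := maxrank_rowsub rk.
pose M := mxsub f g A.
have MqE : rowsub f (colsub g Aq) = map_mx intr M by apply/matrixP => i j; rewrite !mxE.
exists (signed_minors M).
  have := signed_minors_neq0 free; rewrite MqE map_signed_minors.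
  by apply: contra_neq => ->; exact: map_mx0.
split=> [|j].
  have [D DE] := submxP sub; apply/eqP; rewrite -map_intr_eq0 map_mxM.
  have -> : map_mx intr (colsub g A) = colsub g Aq by apply/matrixP => i j; rewrite !mxE.
  by rewrite DE MqE -mulmxA -map_signed_minors mul_signed_minors mulmx0.
have : \det (mxsub f (g \o lift j) A) \in [:: -1; 0; 1].
  exact: TU finj (inj_comp ginj (@lift_inj _ j)).
rewrite mxE normrM normrX normrN normr1 expr1n mul1r !inE.
have -> : colsub (lift j) M = mxsub f (g \o lift j) A by apply/matrixP => a b; rewrite !mxE.
by case/or3P => /eqP ->.
Qed.

Lemma TU_circuit_integral (s v : 'cV[rat]_n) :
  Aq *m v = 0 -> v != 0 -> sign_conformal v s ->
  (forall w, Aq *m w = 0 -> w != 0 -> sign_conformal w s -> (#|supp v| <= #|supp w|)%N) ->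
  exists W : 'cV[int]_n, [/\ A *m W = 0, forall i, `|W i 0| <= 1,
    (#|supp v| <= d.+1)%N & exists2 a : rat, 0 < a & map_mx intr W = a *: v].
Proof.
move=> Av v0 vs vmin.
have [|k [g [cardv ginj suppv]]] := @set_enum _ (supp v).
  by have /cV0Pn [i vi] := v0; apply/card_gt0P; exists i; rewrite inE.
have rk := circuit_rank Av v0 vs vmin ginj suppv.
have [w w0 [Aw w1]] := TU_kernel_vector ginj rk.
pose W := colsub g 1%:M *m w.
have W1 i : `|W i 0| <= 1.
  have [/codomP [j ->]|out] := boolP (i \in codom g); last by rewrite colsub1_mul_out.
  by rewrite colsub1_mulE.
have [||a Wa] := circuit_multiple Av v0 vs vmin (w := map_mx intr W).
  by rewrite -map_mxM mul_colsub1 Aw map_mx0.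
  apply/subsetP => i; rewrite suppv inE mxE; apply: contraR => out.
  by rewrite colsub1_mul_out.
have a0 : a != 0.
  apply: contraNneq w0 => a0; rewrite -(rowsub_colsub1_mul ginj w) -/W.
  move: Wa; rewrite a0 scale0r => /eqP; rewrite map_intr_eq0 => /eqP ->.
  by apply/eqP/matrixP => i j; rewrite !mxE.
pose sg : int := if 0 < a then 1 else -1.
exists (sg *: W); split.
- by rewrite -scalemxAr mul_colsub1 Aw scaler0.
- by move=> i; rewrite mxE normrM /sg; case: ifP; rewrite ?normrN normr1 mul1r.
- by rewrite cardv ltnS -rk rank_leq_row.
exists `|a|; first by rewrite normr_gt0.
apply/matrixP => i j; rewrite !mxE intrM.
have := congr1 (fun X : 'cV[rat]_n => X i j) Wa; rewrite !mxE => ->.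
rewrite mulrA /sg; case: ifP => [a_gt0|/negbT]; rewrite ?rmorph1 ?rmorphN1 ?mul1r ?mulN1r.
  by rewrite gtr0_norm.
by rewrite -leNgt => a_le0; rewrite ler0_norm.
Qed.

Lemma graver_TU (z : 'cV[int]_n) :
  in_graver A z -> (forall i, `|z i 0| <= 1) /\ norm1 z <= d.+1%:Z.
Proof.
move=> [Az z0 zmin]; pose zq := map_mx (intr : int -> rat) z.
have [|v [Av v0 vz] vmin] := exists_minimizer (fun v => #|supp v|)
    (P := fun v => [/\ Aq *m v = 0, v != 0 & sign_conformal v zq]).
  exists zq; split; [by rewrite -map_mxM Az map_mx0 | by rewrite map_intr_eq0 |].
  by move=> i; split=> [|->//]; rewrite -expr2 sqr_ge0.
have [W [AW W1 cardv [a a0 Wa]]] :=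
  TU_circuit_integral Av v0 vz (fun w Aw w0 wz => vmin w (And3 Aw w0 wz)).
have WE i : (W i 0)%:~R = a * v i 0.
  by have := congr1 (fun X : 'cV[rat]_n => X i 0) Wa; rewrite !mxE.
have Wv i : (W i 0 == 0) = (v i 0 == 0) by rewrite -(intr_eq0 rat) WE mulf_eq0 gt_eqF.
(* [W] is an integral circuit conformal to [z], so Graver minimality forces [W = z]. *)
have <- : W = z.
  apply: zmin => //.
    by apply: contraNneq v0 => W0; apply/eqP/matrixP => i j; rewrite (ord1 j) !mxE; apply/eqP;
      rewrite -Wv W0 mxE.
  move=> i; split.
    have := proj1 (vz i); rewrite mxE => vzi.
    by rewrite -(ler0z rat) intrM WE -mulrA mulr_ge0 // ltW.
  have [->|Wi] := eqVneq (W i 0) 0; first by rewrite normr0.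
  have zi : z i 0 != 0.
    apply: contra Wi => /eqP zi; rewrite Wv; apply/eqP/(proj2 (vz i)).
    by rewrite mxE zi.
  by apply: le_trans (W1 i) _; move: zi; lia.
split=> //; apply: (@le_trans _ _ (\sum_(i in supp v) 1)).
  rewrite /norm1 [X in _ <= X]big_mkcond /=; apply: ler_sum => i _; rewrite inE -Wv.
  by case: eqP => [->|]; rewrite ?normr0.
by rewrite sumr_const natz; lia.
Qed.

End TotallyUnimodular.

(** * Steepest-descent augmentations *)

Section Augmentation.
Variables (d n : nat) (A : 'M[int]_(d, n)) (b : 'cV[int]_d) (c u : 'cV[int]_n).

Lemma ratio_after_step (x g h : 'cV[int]_n) (al : int) :
  feasible A b u x -> g != 0 -> h != 0 ->
  (forall z, in_graver A z -> feasible A b u (x + z) -> sd_ratio c z <= sd_ratio c g) ->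
  0 < sd_ratio c g -> 1 <= al -> feasible A b u (x + al *: g + h) ->
  sd_ratio c h <= sd_ratio c g /\
  (sd_ratio c h = sd_ratio c g -> forall i, 0 <= g i 0 * h i 0).
Proof.
move=> fx g0 h0 cap rho_gt0 al1 fh.
have := graver_ratio_bound fx cap (w := al *: g + h); rewrite addrA => /(_ fh).
have tri := norm1_scaleD_le g h (le_trans ler01 al1); rewrite -(ler_int rat) in tri.
rewrite dotvD dotvZ opprD -mulrN !intrD !intrM sd_ratio_mul // sd_ratio_le //.
move: rho_gt0 tri; rewrite intrD intrM.
set rho := sd_ratio c g; set N := (norm1 g)%:~R; set H := (norm1 h)%:~R.
set W := (norm1 _)%:~R; set Q := (- dotv c h)%:~R; set a := al%:~R => rho_gt0 tri bound.
have a1 : 1 <= a by rewrite ler1z.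
split; first nra.
move=> eq_rho; have QE : Q = rho * H by rewrite /Q sd_ratio_mul // eq_rho.
apply: (norm1_scaleD_tight (lt_le_trans ltr01 al1)).
by rewrite -(ler_int rat) intrD intrM -/N -/H -/W -/a; nra.
Qed.

Lemma blocking_coordinate (x g : 'cV[int]_n) (al : int) :
  (forall i, `|g i 0| <= 1) -> A *m g = 0 -> feasible A b u (x + al *: g) ->
  (forall be, feasible A b u (x + be *: g) -> be <= al) ->
  exists i, g i 0 != 0 /\ forall h : 'cV[int]_n, (forall j, `|h j 0| <= 1) ->
    feasible A b u (x + al *: g + h) -> 0 <= g i 0 * h i 0 -> h i 0 = 0.
Proof.
move=> g1 Ag [Axg xgb] almax.
have /forallPn [i out] : ~~ [forall i, 0 <= (x + (al + 1) *: g) i 0 <= u i 0].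
  apply/negP => /forallP inb.
  have : feasible A b u (x + (al + 1) *: g).
    split=> //; rewrite mulmxDr -scalemxAr Ag scaler0 addr0.
    by move: Axg; rewrite mulmxDr -scalemxAr Ag scaler0 addr0.
  by move/almax; lia.
have := xgb i; move: out; rewrite !mxE; set p := g i 0; set y := x i 0; set U := u i 0.
move=> out inb; have gi : p != 0.
  by apply: contraNneq out => p0; move: inb; rewrite p0 !mulr0 !addr0.
exists i; split=> // h h1 [_ hb] sgn.
have := hb i; have := h1 i; have := g1 i; rewrite !mxE -/p -/y -/U.
set q := h i 0 => g1i h1i hbi; apply/eqP; apply: contraNT out => q0.
have pq : p = q by move: gi q0 sgn; rewrite -/p -/q; nia.
by move: hbi; rewrite pq mulrDl mul1r addrA.
Qed.

Hypothesis TU : totally_unimodular A.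

(* What the analysis retains from one augmentation [x -> y] along [g], with
   blocking coordinate [i]. *)
Definition sd_move (x y g : 'cV[int]_n) (i : 'I_n) : Prop :=
  [/\ in_graver A g, feasible A b u (x + g), 0 < sd_ratio c g,
      forall h, in_graver A h -> feasible A b u (y + h) ->
        sd_ratio c h <= sd_ratio c g /\
        (sd_ratio c h = sd_ratio c g ->
           (forall j, 0 <= g j 0 * h j 0) /\ feasible A b u (x + h))
    & g i 0 != 0 /\ forall h, in_graver A h -> feasible A b u (y + h) ->
        0 <= g i 0 * h i 0 -> h i 0 = 0].

Lemma sd_step_move (x y : 'cV[int]_n) :
  feasible A b u x -> sd_step A b c u x y -> exists g i, sd_move x y g i.
Proof.
move=> fx [g [al [[gG fg cap rho_gt0] [fy almax ->]]]].
have [Ag g0 _] := gG; have [g1 _] := graver_TU TU gG.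
have al1 : 1 <= al by apply: almax; rewrite scale1r.
have [i [gi blocks]] := blocking_coordinate g1 Ag fy almax.
exists g, i; split=> // [h hG fh|]; last first.
  by split=> // h hG fh; apply: blocks; have [] := graver_TU TU hG.
have [Ah h0 _] := hG; have [le_rho eq_rho] := ratio_after_step fx g0 h0 cap rho_gt0 al1 fh.
split=> // /eq_rho sgn; split=> //.
apply: (feasible_conformal (W := al *: g + h) fx) _ _ Ah; first by rewrite addrA.
exact: conformal_scaleDl (le_trans ler01 al1) sgn.
Qed.

End Augmentation.

Section Run.
Variables (d n : nat) (A : 'M[int]_(d, n)) (b : 'cV[int]_d) (c u : 'cV[int]_n).
Hypothesis TU : totally_unimodular A.
Variables (xs : nat -> 'cV[int]_n) (m : nat) (g : nat -> 'cV[int]_n) (blk : nat -> 'I_n).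
Hypothesis moves : forall k, (k < m)%N -> sd_move A b c u (xs k) (xs k.+1) (g k) (blk k).

Local Notation r k := (sd_ratio c (g k)).

Lemma run_ratio_nonincreasing k l : (k <= l)%N -> (l < m)%N -> r l <= r k.
Proof.
elim: l => [|l IH] kl lm; first by move: kl; rewrite leqn0 => /eqP ->.
have [-> //|neq] := eqVneq k l.+1.
apply: (le_trans _ (IH _ (ltnW lm))); last by rewrite -ltnS ltn_neqAle neq kl.
have [gG fg _ _ _] := moves lm; have [_ _ _ cap _] := moves (ltnW lm).
by have [] := cap _ gG fg.
Qed.

Lemma run_feasible_back k l : (k < l < m)%N -> r l = r k ->
  feasible A b u (xs k.+1 + g l).
Proof.
move=> /andP [kl lm] eq_r; have [gG fg _ _ _] := moves lm.
have back j : (k < j < l)%N -> feasible A b u (xs j.+1 + g l) -> feasible A b u (xs j + g l).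
  move=> /andP [kj jl] fj; have [_ _ _ cap _] := moves (ltn_trans jl lm).
  have le_lj := run_ratio_nonincreasing (ltnW jl) lm.
  have le_jk := run_ratio_nonincreasing (ltnW kj) (ltn_trans jl lm).
  have [_ eq_case] := cap _ gG fj; apply: (proj2 (eq_case _)).
  by apply/eqP; rewrite eq_le le_lj eq_r le_jk.
have back_from_l t : (t <= l - k.+1)%N -> feasible A b u (xs (l - t)%N + g l).
  elim: t => [|t IH] tl; first by rewrite subn0.
  apply: back; first by apply/andP; split; lia.
  have -> : (l - t.+1).+1 = (l - t)%N by lia.
  by apply: IH; lia.
by have := back_from_l _ (leqnn _); rewrite subKn.
Qed.

Lemma run_blocking_neq k l : (k < l < m)%N -> r l = r k -> blk k != blk l.
Proof.
move=> klm eq_r; have /andP [kl lm] := klm.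
have fl := run_feasible_back klm eq_r.
have [gG _ _ _ [gl0 _]] := moves lm; have [_ _ _ cap [_ blocks]] := moves (ltn_trans kl lm).
have [_ /(_ eq_r) [sgn _]] := cap _ gG fl.
by apply: contra_neq gl0 => <-; apply: blocks gG fl (sgn _).
Qed.

(* Steps sharing the numerator and denominator of their ratio have distinct
   blocking coordinates, whence the count. *)
Lemma run_length : m%:Z <= (n * d.+1)%:Z * norm1 c.
Proof.
have bounds k : (k < m)%N ->
    [/\ 0 < - dotv c (g k), - dotv c (g k) <= norm1 c, 0 < norm1 (g k) & norm1 (g k) <= d.+1%:Z].
  move=> km; have [gG _ pos _ _] := moves km; have [_ g0 _] := gG.
  have [g1 nd] := graver_TU TU gG.
  by rewrite -sd_ratio_gt0 // oppr_dotv_le_norm1 // norm1_gt0 g0 nd.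
pose C := absz (norm1 c).
pose F k := (absz (- dotv c (g k)), absz (norm1 (g k)), nat_of_ord (blk k)).
pose box := [seq (ab, i) | ab <- [seq (a, a') | a <- iota 1 C, a' <- iota 1 d.+1], i <- iota 0 n].
have Finj : {in iota 0 m &, injective F}.
  move=> k l; rewrite !mem_iota !add0n => km lm [eP eN eB].
  have [Pk Ck Nk dk] := bounds _ km; have [Pl Cl Nl dl] := bounds _ lm.
  have eq_r : r k = r l by rewrite /sd_ratio; congr (_%:~R / _%:~R); lia.
  have eq_blk : blk k = blk l by apply: val_inj.
  have [kl|lk|//] := ltngtP k l.
    by have := run_blocking_neq (introT andP (conj kl lm)) (esym eq_r); rewrite eq_blk eqxx.
  by have := run_blocking_neq (introT andP (conj lk km)) eq_r; rewrite eq_blk eqxx.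
have Fbox : {subset map F (iota 0 m) <= box}.
  move=> _ /mapP [k + ->]; rewrite mem_iota add0n => km.
  have [Pk Ck Nk dk] := bounds _ km.
  have := ltn_ord (blk k); rewrite /F /box /C => ?.
  by apply: allpairs_f; [apply: allpairs_f|]; rewrite mem_iota; lia.
have := uniq_leq_size _ Fbox; rewrite map_inj_in_uniq ?iota_uniq // size_map size_iota.
rewrite !size_allpairs !size_iota => /(_ isT) le_m.
have -> : norm1 c = C%:Z by rewrite gez0_abs ?norm1_ge0.
by rewrite -PoszM; lia.
Qed.

End Run.

Section Iterates.
Variables (d n : nat) (A : 'M[int]_(d, n)) (b : 'cV[int]_d) (c u : 'cV[int]_n).
Variables (xs : nat -> 'cV[int]_n) (m : nat).
Hypotheses (feasible0 : feasible A b u (xs 0%N))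
  (steps : forall k, (k < m)%N -> sd_step A b c u (xs k) (xs k.+1)).

Lemma sd_iterates_feasible k : (k <= m)%N -> feasible A b u (xs k).
Proof. by case: k => [|k] // km; have [z [al [_ [+ _ ->]]]] := steps km. Qed.

Lemma sd_run_length : totally_unimodular A -> m%:Z <= (n * d.+1)%:Z * norm1 c.
Proof.
move=> TU; have [->|m0] := posnP m; first by rewrite mulr_ge0 ?norm1_ge0.
have moves k : (k < m)%N ->
    exists gi : 'cV[int]_n * 'I_n, sd_move A b c u (xs k) (xs k.+1) gi.1 gi.2.
  move=> km; have fk := sd_iterates_feasible (ltnW km).
  by have [g [i mv]] := sd_step_move TU fk (steps km); exists (g, i).
have [gi0 _] := moves _ m0.
have total k : exists gi : 'cV[int]_n * 'I_n,
    (k < m)%N -> sd_move A b c u (xs k) (xs k.+1) gi.1 gi.2.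
  have [km|mk] := ltnP k m; first by have [gi mv] := moves _ km; exists gi.
  by exists gi0.
have [G HG] := IndefiniteDescription.functional_choice _ total.
exact: (run_length TU (g := fun k => (G k).1) (blk := fun k => (G k).2) HG).
Qed.

End Iterates.

Theorem corollary4 (d n : nat) (A : 'M[int]_(d, n)) (b : 'cV[int]_d)
  (c u : 'cV[int]_n) :
  totally_unimodular A ->
  (forall i, 0 <= u i 0) ->
  forall (xs : nat -> 'cV[int]_n) (m : nat),
    feasible A b u (xs 0%N) ->
    (forall k, (k < m)%N -> sd_step A b c u (xs k) (xs k.+1)) ->
    ((m%:Z <= (n * d.+1)%:Z * norm1 c)%R /\
     (sd_stops A b c u (xs m) -> optimal A b c u (xs m))).
Proof.
(* [0 <= u] is implied by the feasibility of [xs 0]. *)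
move=> TU _ xs m feasible0 steps; split; first exact: (sd_run_length feasible0 steps TU).
exact: sd_stops_optimal (sd_iterates_feasible feasible0 steps (leqnn m)).
Qed.
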